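(* Let $(X,\le)$ be a poset and $E$ an equivalence relation on $X$ with ${\le}\subseteq E$. Then: (i) ${\le}\in\mathsf{Up}(\mathbf E)$; (ii) ${\le}\circ R=R\circ{\le}=R$ for all $R\in\mathsf{Up}(\mathbf E)$; (iii) ${\le}^\smile\circ S=S\circ{\le}^\smile=S$ for all $S\in\mathsf{Down}(\mathbf E)$.
   Context: For binary relations: converse $R^\smile=\{(x,y)\mid(y,x)\in R\}$; composition $R\circ S=\{(x,y)\mid\exists z\,((x,z)\in R,(z,y)\in S)\}$. For a poset $(X,\le)$ and an equivalence relation $E\supseteq{\le}$ on $X$, $E$ is partially ordered by $(u,v)\preceq(x,y)$ iff $x\le u$ and $v\le y$; $\mathbf E=(E,\preceq)$, and $\mathsf{Up}(\mathbf E)$, $\mathsf{Down}(\mathbf E)$ are its sets of up-sets and down-sets. The relation $\le$ is regarded as the set $\{(x,y)\mid x\le y\}\subseteq X^2$. *)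

From Stdlib Require Export RelationClasses.

Definition brel (X : Type) := X -> X -> Prop.

Definition converse {X : Type} (R : brel X) : brel X := fun x y => R y x.

Definition comp {X : Type} (R S : brel X) : brel X :=
  fun x y => exists z, R x z /\ S z y.

Definition subrel {X : Type} (R S : brel X) : Prop := forall x y, R x y -> S x y.
Definition releq {X : Type} (R S : brel X) : Prop := forall x y, R x y <-> S x y.

(* The order on E:  (u,v) ⪯ (x,y)  iff  x <= u and v <= y *)
Definition E_ord {X : Type} (le : brel X) (p q : X * X) : Prop :=
  le (fst q) (fst p) /\ le (snd p) (snd q).

Definition Up {X : Type} (le E : brel X) (R : brel X) : Prop :=
  subrel R E /\
  forall u v x y, R u v -> E x y -> E_ord le (u, v) (x, y) -> R x y.

Definition Down {X : Type} (le E : brel X) (S : brel X) : Prop :=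
  subrel S E /\
  forall u v x y, S u v -> E x y -> E_ord le (x, y) (u, v) -> S x y.


(* Composing an up-set R with <= on either side only moves a pair upward in
   (E, ⪯), so the result stays inside R; reflexivity of <= gives the reverse
   inclusion.  Dually for down-sets and the converse order. *)

Section UpDownComposition.

Variables (X : Type) (le E : brel X).

Hypothesis le_reflexive : Reflexive le.
Hypothesis le_transitive : Transitive le.
Hypothesis E_symmetric : Symmetric E.
Hypothesis E_transitive : Transitive E.
Hypothesis le_sub_E : subrel le E.

Lemma le_Up : Up le E le.
Proof.
  split; [exact le_sub_E |].
  intros u v x y Huv _ [Hxu Hvy].
  apply le_transitive with u; [exact Hxu |].
  apply le_transitive with v; assumption.
Qed.

Lemma comp_le_Up (R : brel X) : Up le E R -> releq (comp le R) R.
Proof.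
  intros [R_sub_E R_up] x y; split.
  - intros [z [Hxz Rzy]].
    apply (R_up z y); [exact Rzy | | split; [exact Hxz | apply le_reflexive]].
    apply E_transitive with z; [apply le_sub_E | apply R_sub_E]; assumption.
  - intros Rxy; exists x; split; [apply le_reflexive | exact Rxy].
Qed.

Lemma comp_Up_le (R : brel X) : Up le E R -> releq (comp R le) R.
Proof.
  intros [R_sub_E R_up] x y; split.
  - intros [z [Rxz Hzy]].
    apply (R_up x z); [exact Rxz | | split; [apply le_reflexive | exact Hzy]].
    apply E_transitive with z; [apply R_sub_E | apply le_sub_E]; assumption.
  - intros Rxy; exists y; split; [exact Rxy | apply le_reflexive].
Qed.

Lemma comp_converse_le_Down (S : brel X) :
  Down le E S -> releq (comp (converse le) S) S.
Proof.
  intros [S_sub_E S_down] x y; split.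
  - intros [z [Hzx Szy]].
    apply (S_down z y); [exact Szy | | split; [exact Hzx | apply le_reflexive]].
    apply E_transitive with z; [apply E_symmetric, le_sub_E | apply S_sub_E];
      assumption.
  - intros Sxy; exists x; split; [apply le_reflexive | exact Sxy].
Qed.

Lemma comp_Down_converse_le (S : brel X) :
  Down le E S -> releq (comp S (converse le)) S.
Proof.
  intros [S_sub_E S_down] x y; split.
  - intros [z [Sxz Hyz]].
    apply (S_down x z); [exact Sxz | | split; [apply le_reflexive | exact Hyz]].
    apply E_transitive with z; [apply S_sub_E | apply E_symmetric, le_sub_E];
      assumption.
  - intros Sxy; exists y; split; [exact Sxy | apply le_reflexive].
Qed.

End UpDownComposition.

Theorem lemma3p6 (X : Type) (le E : brel X)
  (le_pre : PreOrder le) (le_anti : Antisymmetric X eq le)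
  (E_equiv : Equivalence E) (le_sub_E : subrel le E) :
  Up le E le /\
  (forall R, Up le E R -> releq (comp le R) R /\ releq (comp R le) R) /\
  (forall S, Down le E S ->
     releq (comp (converse le) S) S /\ releq (comp S (converse le)) S).
Proof.
  split; [| split].
  - apply le_Up; [exact PreOrder_Transitive | exact le_sub_E].
  - intros R HR; split.
    + apply comp_le_Up with E; auto with typeclass_instances.
    + apply comp_Up_le with E; auto with typeclass_instances.
  - intros S HS; split.
    + apply comp_converse_le_Down with E; auto with typeclass_instances.
    + apply comp_Down_converse_le with E; auto with typeclass_instances.
Qed.
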